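(* Let $G$ be a connected bipartite graph, $v\in V(G)$, and let $c_0$ be the mill-pond configuration $MP(v)$, i.e. $c_0(v)=1$ and $c_0(x)=0$ for all $x\neq v$. Then for every $t\geq0$, $c_t(v)=1$ if $t$ is even and $c_t(v)=1-\deg(v)$ if $t$ is odd. Moreover, for $i\in\{1,2,\ldots,\epsilon(v)\}$ and $x\in N_i(v)$, \[c_t(x)=\begin{cases}0 & t<i,\\ \deg^+(x) & t\geq i \text{ and } t-i\equiv 0 \pmod 2,\\ -\deg^-(x) & t\geq i \text{ and } t-i\equiv 1\pmod 2.\end{cases}\]
   Context: Diffusion process: for a finite simple graph $G$ and a chip configuration $c_t:V(G)\to\mathbb{Z}$ (negative values allowed), the next configuration is defined simultaneously for every vertex $u$ by $c_{t+1}(u)=c_t(u)-|\{w\in N(u): c_t(u)>c_t(w)\}|+|\{w\in N(u): c_t(u)<c_t(w)\}|$. $\epsilon(v)=\max_{w\in V(G)} d(v,w)$ is the eccentricity of $v$. For $i\geq0$, $N_i(v)$ is the set of vertices at distance exactly $i$ from $v$ (so $N_0(v)=\{v\}$). For $x\in N_i(v)$ with $i\geq1$, $\deg^+(x)=|N(x)\cap N_{i-1}(v)|$; for $x\in N_i(v)$ with $i\geq0$, $\deg^-(x)=|N(x)\cap N_{i+1}(v)|$. *)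

From mathcomp Require Import all_boot all_order all_algebra.
Set Implicit Arguments. Unset Strict Implicit. Unset Printing Implicit Defensive.
Import Order.TTheory GRing.Theory Num.Theory.

Section Graph.
Variables (T : finType) (e : rel T).

Definition simple_graph : Prop := symmetric e /\ irreflexive e.
Definition connected_graph : Prop := forall x y : T, connect e x y.
Definition bipartite : Prop :=
  exists col : T -> bool, forall x y, e x y -> col x != col y.

Fixpoint walkb (n : nat) (x y : T) : bool :=
  if n is n'.+1 then [exists z, e x z && walkb n' z y] else x == y.

Definition inN (v : T) (i : nat) (x : T) : bool :=
  walkb i v x && [forall j : 'I_i, ~~ walkb j v x].

Definition deg (x : T) : nat := #|[set w | e x w]|.
Definition deg_plus (v : T) (i : nat) (x : T) : nat :=
  #|[set w | e x w & inN v i.-1 w]|.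
Definition deg_minus (v : T) (i : nat) (x : T) : nat :=
  #|[set w | e x w & inN v i.+1 w]|.

Local Open Scope ring_scope.
Definition diffuse (c : T -> int) : T -> int := fun u =>
  c u - (#|[set w | e u w & c w < c u]|)%:Z + (#|[set w | e u w & c u < c w]|)%:Z.
Definition config (c0 : T -> int) (t : nat) : T -> int := iter t diffuse c0.
Definition millpond (v : T) : T -> int := fun x => if x == v then 1 else 0.
End Graph.

From mathcomp Require Import all_boot all_order all_algebra.
From mathcomp Require Import zify.
Import Order.TTheory GRing.Theory Num.Theory.
Set Implicit Arguments. Unset Strict Implicit. Unset Printing Implicit Defensive.

(* In a connected bipartite graph every edge joins two consecutive distance
   layers N_i(v) and N_(i+1)(v). Starting from MP(v), a wave travels outwards
   one layer per step: at time t a vertex at distance i <= t is at a crest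
   (value >= 1) when t - i is even and in a trough (value <= 0) when t - i is
   odd, while vertices with i > t are still quiet (value 0). Along every edge the outer
   endpoint is therefore below a crest and above a trough, so each vertex
   either gives a chip to every neighbour, or receives one from every
   neighbour, or (when the wave front reaches it) receives one from each of
   its deg^+ parents. This reproduces the closed form one step later. *)

Section Graph.
Variables (T : finType) (e : rel T).

Lemma walkb_rcons n a x y : walkb e n a x -> e x y -> walkb e n.+1 a y.
Proof.
elim: n a => [|n IHn] a /=.
  by move=> /eqP -> exy; apply/existsP; exists y; rewrite exy eqxx.
case/existsP=> z /andP[eaz wzx] exy; apply/existsP; exists z.
by rewrite eaz; apply: IHn wzx exy.
Qed.

Lemma walkb_last n a y : walkb e n.+1 a y -> exists2 z, walkb e n a z & e z y.
Proof.
elim: n a => [|n IHn] a /=.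
  by case/existsP=> z /andP[eaz /eqP <-]; exists a.
case/existsP=> z /andP[eaz /IHn[z' wzz' ez'y]].
by exists z' => //; apply/existsP; exists z; rewrite eaz.
Qed.

Lemma walkb_col (col : T -> bool) : (forall x y, e x y -> col x != col y) ->
  forall n a x, walkb e n a x -> col x = col a (+) odd n.
Proof.
move=> col_e; elim=> [|n IHn] a x /=; first by move=> /eqP ->; rewrite addbF.
case/existsP=> z /andP[/col_e caz /IHn ->].
by move: caz; case: (col a); case: (col z); case: (odd n).
Qed.

Lemma connect_walkb a x : connect e a x -> exists n, walkb e n a x.
Proof.
case/connectP=> p; elim: p a => [|y p IHp] a /=.
  by move=> _ ->; exists 0%N; rewrite /= eqxx.
case/andP=> eay /IHp /[apply] -[n wyx].
by exists n.+1; apply/existsP; exists y; rewrite eay.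
Qed.

Lemma diffuse_ext (c c' : T -> int) : c =1 c' -> diffuse e c =1 diffuse e c'.
Proof.
move=> eq_c u; rewrite /diffuse eq_c.
by congr (_ - _%:Z + _%:Z)%R; apply: eq_card => w; rewrite !inE !eq_c.
Qed.

Lemma card_nbr_const x (b : bool) : #|[set w | e x w & b]| = if b then deg e x else 0.
Proof.
case: b; first by apply: eq_card => w; rewrite !inE andbT.
by apply: eq_card0 => w; rewrite !inE andbF.
Qed.

End Graph.

Definition crest (t n : nat) : bool := (n <= t) && ~~ odd (t - n).
Definition trough (t n : nat) : bool := (n <= t) && odd (t - n).

Lemma crestS t n : crest t.+1 n = trough t n || (n == t.+1).
Proof.
rewrite /crest /trough; case: (leqP n t) => [le|lt].
  by rewrite subSn // negbK leqW // ltn_eqF // orbF.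
by case: (ltngtP n t.+1) lt => // -> _; rewrite subnn.
Qed.

Lemma troughS t n : trough t.+1 n = crest t n.
Proof.
rewrite /crest /trough; case: (leqP n t) => [le|lt]; first by rewrite subSn // leqW.
by case: (ltngtP n t.+1) lt => // -> _; rewrite subnn.
Qed.

Lemma crest_layerS t n : crest t n.+1 = trough t n.
Proof.
rewrite /crest /trough; case: (ltngtP n t) => [lt|//|->]; last by rewrite subnn.
rewrite subnS /=; rewrite -subn_gt0 in lt.
by case: (t - n) lt => // k _ /=; rewrite negbK.
Qed.

Lemma crest_layer t n : crest t n = trough t n.+1 || (t == n).
Proof.
rewrite /crest /trough; case: (ltngtP n t) => [lt|//|->]; last by rewrite subnn.
rewrite subnS /= orbF; rewrite -subn_gt0 in lt.
by case: (t - n) lt => // k _ /=; rewrite negbK.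
Qed.

Lemma trough_crestF t n : trough t n -> crest t n = false.
Proof. by rewrite /crest /trough => /andP[_ ->]; rewrite andbF. Qed.

Lemma ltn_not_crest_trough t n : ~~ crest t n -> ~~ trough t n -> t < n.
Proof. by rewrite /crest /trough ltnNge; case: (n <= t); case: odd. Qed.

Section Distance.
Variables (T : finType) (e : rel T) (v : T) (col : T -> bool).
Hypothesis e_sym : symmetric e.
Hypothesis col_e : forall x y, e x y -> col x != col y.
Hypothesis reach : forall x, exists n, walkb e n v x.

Definition dist x : nat := ex_minn (reach x).

Lemma dist_walkb x : walkb e (dist x) v x.
Proof. by rewrite /dist; case: ex_minnP. Qed.

Lemma dist_min n x : walkb e n v x -> dist x <= n.
Proof. by rewrite /dist; case: ex_minnP => m _; apply. Qed.

Lemma inN_dist i x : inN e v i x = (dist x == i).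
Proof.
apply/idP/eqP => [/andP[wix /forallP nw] | <-].
  apply/eqP; rewrite eqn_leq dist_min //= leqNgt; apply/negP => lt.
  by have := nw (Ordinal lt); rewrite dist_walkb.
rewrite /inN dist_walkb; apply/forallP => j; apply/negP => /dist_min.
by rewrite leqNgt ltn_ord.
Qed.

Lemma dist_eq0 x : (dist x == 0) = (x == v).
Proof.
apply/eqP/eqP => [d0 | ->]; first by have := dist_walkb x; rewrite d0 => /eqP.
by apply/eqP; rewrite -leqn0 dist_min //= eqxx.
Qed.

Lemma dist_root : dist v = 0.
Proof. by apply/eqP; rewrite dist_eq0. Qed.

Lemma dist_edge x y : e x y -> dist y = (dist x).+1 \/ dist x = (dist y).+1.
Proof.
move=> exy.
have le_yx : dist y <= (dist x).+1 by apply/dist_min/(walkb_rcons (dist_walkb x)).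
have le_xy : dist x <= (dist y).+1 by apply/dist_min/(walkb_rcons (dist_walkb y)); rewrite e_sym.
have : odd (dist x) != odd (dist y).
  have := col_e exy; rewrite (walkb_col col_e (dist_walkb x)) (walkb_col col_e (dist_walkb y)).
  by case: (col v); case: (odd (dist x)); case: (odd (dist y)).
case: (ltngtP (dist x) (dist y)) => [lt|gt|->]; last by rewrite eqxx.
  by left; apply/eqP; rewrite eqn_leq le_yx.
by right; apply/eqP; rewrite eqn_leq le_xy.
Qed.

Lemma dist_parent x : x != v -> exists2 z, e x z & dist z < dist x.
Proof.
rewrite -dist_eq0; case dx: (dist x) => [|n] // _.
have [z wz ezx] : exists2 z, walkb e n v z & e z x by apply: walkb_last; rewrite -dx dist_walkb.
by exists z; [rewrite e_sym | rewrite ltnS dist_min].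
Qed.

Local Notation degp x := (deg_plus e v (dist x) x).
Local Notation degm x := (deg_minus e v (dist x) x).

Lemma deg_plusE x : degp x = #|[set w | e x w & dist w < dist x]|.
Proof.
apply: eq_card => w; rewrite !inE inN_dist; case exw: (e x w) => //=.
by case: (dist_edge exw) => ->; apply/eqP/idP; lia.
Qed.

Lemma deg_minusE x : degm x = #|[set w | e x w & dist x < dist w]|.
Proof.
apply: eq_card => w; rewrite !inE inN_dist; case exw: (e x w) => //=.
by case: (dist_edge exw) => ->; apply/eqP/idP; lia.
Qed.

Lemma deg_split x : deg e x = degp x + degm x.
Proof.
rewrite /deg -(cardsID [set w | dist w < dist x]) deg_plusE deg_minusE.
congr (_ + _); apply: eq_card => w; rewrite !inE; case exw: (e x w); rewrite ?andbF //=;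
  by case: (dist_edge exw) => ->; lia.
Qed.

Lemma deg_plus_gt0 x : x != v -> 0 < degp x.
Proof.
by case/dist_parent=> z exz ltzx; rewrite deg_plusE; apply/card_gt0P; exists z; rewrite inE exz.
Qed.

Lemma deg_minus_gt0 x w : e x w -> dist x < dist w -> 0 < degm x.
Proof. by move=> exw ltxw; rewrite deg_minusE; apply/card_gt0P; exists w; rewrite inE exw. Qed.

Lemma deg_plus_root : degp v = 0.
Proof. by rewrite deg_plusE dist_root; apply: eq_card0 => w; rewrite !inE andbF. Qed.

Local Open Scope ring_scope.

(* At the root deg^+ = 0 and deg^- = deg, so the extra chip at v gives the
   values 1 and 1 - deg v there. *)
Definition profile t x : int :=
  (x == v)%:Z + (if crest t (dist x) then (degp x)%:Z
                 else if trough t (dist x) then - (degm x)%:Z else 0).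

Lemma profile_crest_ge1 t x : crest t (dist x) -> 1 <= profile t x.
Proof.
rewrite /profile => ->; case: eqP => [_ | /eqP/deg_plus_gt0]; lia.
Qed.

Lemma profile_le0 t x : x != v -> ~~ crest t (dist x) -> profile t x <= 0.
Proof. by rewrite /profile => /negbTE -> /negbTE ->; case: trough; lia. Qed.

Lemma profile_trough_le0 t x w :
  e x w -> (dist x < dist w)%N -> trough t (dist x) -> profile t x <= 0.
Proof.
move=> exw ltxw tx; have := deg_minus_gt0 exw ltxw.
rewrite /profile tx trough_crestF //; case: (x == v); lia.
Qed.

Lemma profile_quiet t x : (t < dist x)%N -> profile t x = 0.
Proof.
move=> lt; have nv : x != v by rewrite -dist_eq0 -lt0n (leq_ltn_trans _ lt).
by rewrite /profile /crest /trough (negbTE nv) leqNgt lt.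
Qed.

Lemma profile_cmp_child t x w : e x w -> dist w = (dist x).+1 ->
  (profile t w < profile t x) = crest t (dist x) /\
  (profile t x < profile t w) = trough t (dist x).
Proof.
move=> exw dw; have wnv : w != v by rewrite -dist_eq0 dw.
case cx: (crest t (dist x)).
  have tx : trough t (dist x) = false by apply: contraTF cx => /trough_crestF ->.
  have cw : crest t (dist w) = false by rewrite dw crest_layerS.
  have := profile_crest_ge1 cx; have := profile_le0 wnv (negbT cw).
  by rewrite tx; split; lia.
case tx: (trough t (dist x)).
  have cw : crest t (dist w) by rewrite dw crest_layerS.
  have ltxw : (dist x < dist w)%N by rewrite dw.
  have := profile_trough_le0 exw ltxw tx; have := profile_crest_ge1 cw.
  by split; lia.
have lt := ltn_not_crest_trough (negbT cx) (negbT tx).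
by rewrite !profile_quiet ?dw ?ltxx //; lia.
Qed.

Lemma profile_lt_nbr t x w : e x w ->
  (profile t w < profile t x) = crest t (dist x) /\
  (profile t x < profile t w) = trough t (dist x) || (t.+1 == dist x) && (dist w < dist x)%N.
Proof.
move=> exw; case: (dist_edge exw) => [dw | dx].
  by rewrite dw ltnNge leqnSn andbF orbF; apply: profile_cmp_child.
have ewx : e w x by rewrite e_sym.
have [lt_xw lt_wx] := profile_cmp_child t ewx dx.
by rewrite lt_xw lt_wx dx eqSS ltnSn andbT crest_layerS -crest_layer.
Qed.

Lemma diffuse_profile t : diffuse e (profile t) =1 profile t.+1.
Proof.
move=> x; rewrite /diffuse.
have -> : #|[set w | e x w & profile t w < profile t x]| =
          #|[set w | e x w & crest t (dist x)]|.
  by apply: eq_card => w; rewrite !inE; case exw: (e x w); rewrite // (profile_lt_nbr t exw).1.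
have -> : #|[set w | e x w & profile t x < profile t w]| =
          #|[set w | e x w & trough t (dist x) || (t.+1 == dist x) && (dist w < dist x)%N]|.
  by apply: eq_card => w; rewrite !inE; case exw: (e x w); rewrite // (profile_lt_nbr t exw).2.
have := deg_split x; rewrite /profile crestS troughS (eq_sym (dist x)).
case cx: (crest t (dist x)).
  have tx : trough t (dist x) = false by apply: contraTF cx => /trough_crestF ->.
  have nx : (t.+1 == dist x) = false by apply/eqP=> tx1; move: cx; rewrite /crest -tx1 ltnn.
  by rewrite tx nx !card_nbr_const /=; lia.
case tx: (trough t (dist x)); first by rewrite !card_nbr_const /=; lia.
by case: (t.+1 =P dist x) => [_ | _]; rewrite -?deg_plusE !card_nbr_const /=; lia.
Qed.

Lemma profile_root t : profile t v = if odd t then 1 - (deg e v)%:Z else 1.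
Proof.
have := deg_split v; rewrite /profile eqxx deg_plus_root dist_root /crest /trough subn0 /=.
by case: (odd t) => /=; lia.
Qed.

Lemma profile_nonroot t x : x != v -> profile t x =
  if (t < dist x)%N then 0
  else if odd (t - dist x) then - (degm x)%:Z else (degp x)%:Z.
Proof.
move=> /negbTE nv; rewrite /profile /crest /trough nv add0r ltnNge.
by case: (dist x <= t)%N; case: odd.
Qed.

Lemma config_millpond t : config e (millpond v) t =1 profile t.
Proof.
elim: t => [|t IHt] x /=.
  rewrite /millpond; case: eqP => [-> | /eqP nv]; first by rewrite profile_root.
  by rewrite profile_nonroot // lt0n dist_eq0 nv.
by rewrite -diffuse_profile; apply: diffuse_ext.
Qed.

End Distance.

Local Open Scope ring_scope.

Theorem theorem20 (T : finType) (e : rel T) (v : T) :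
  simple_graph e -> connected_graph e -> bipartite e ->
  (forall t : nat,
     config e (millpond v) t v =
       (if odd t then 1 - (deg e v)%:Z else 1)) /\
  (forall (i : nat) (x : T), (1 <= i)%N -> inN e v i x ->
     forall t : nat,
       config e (millpond v) t x =
         (if (t < i)%N then 0
          else if odd (t - i) then - (deg_minus e v i x)%:Z
          else (deg_plus e v i x)%:Z)).
Proof.
move=> [e_sym _] e_conn [col col_e].
have reach x : exists n, walkb e n v x by apply: connect_walkb; apply: e_conn.
split=> [t | i x i_gt0].
  by rewrite (config_millpond e_sym col_e) (profile_root e_sym col_e).
rewrite (inN_dist reach) => /eqP dx t.
have nv : x != v by rewrite -(dist_eq0 reach) dx -lt0n.
by rewrite (config_millpond e_sym col_e) profile_nonroot // dx.
Qed.
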